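(* For each integer $n\geq 2$, the Kneser graph $K(n,2)$ satisfies $\operatorname{tww}(K(n,2))=\operatorname{lb}_1(K(n,2))$, and this value equals $2(n-3)$ if $n\geq 5$ and $0$ otherwise.
   Context: All graphs are finite and simple. The Kneser graph $K(n,2)$ has vertex set the 2-element subsets of $\{1,\dots,n\}$, two vertices being adjacent iff they are disjoint. A trigraph is a graph whose edges are each colored red or black; a graph is viewed as a trigraph with all edges black; the red degree of a vertex is the number of red edges incident to it. For a partition $\mathcal{P}$ of $V(G)$, the quotient trigraph $G/\mathcal{P}$ has vertex set $\mathcal{P}$; two distinct parts $U,W$ are joined by a black edge if every pair $\{u,w\}$ with $u\in U,w\in W$ is a black edge of $G$, are non-adjacent if no such pair is an edge, and are joined by a red edge otherwise. A contraction sequence of an $N$-vertex trigraph $G$ is a sequence $\mathcal{P}_N,\dots,\mathcal{P}_1$ of partitions of $V(G)$ where $\mathcal{P}_N$ is the partition into singletons and each $\mathcal{P}_i$ arises from $\mathcal{P}_{i+1}$ by merging two parts; its width is the maximum red degree over all $G/\mathcal{P}_i$, and $\operatorname{tww}(G)$ is the minimum width of a contraction sequence. For $|V(G)|\geq 2$, $\operatorname{lb}_1(G)$ is the minimum over all 2-element subsets $\{u,v\}\subseteq V(G)$ of the maximum red degree of $G/\mathcal{P}$ where $\mathcal{P}$ has $\{u,v\}$ as its only non-singleton part; $\operatorname{lb}_1(G)=0$ if $|V(G)|=1$. *)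

From mathcomp Require Import all_boot.
Set Implicit Arguments. Unset Strict Implicit. Unset Printing Implicit Defensive.

Section TwinWidth.
Variable T : finType.
Variable e : rel T.

Definition simple_graph := symmetric e /\ irreflexive e.

Definition red_edge (U W : {set T}) : bool :=
  [exists u in U, exists w in W, e u w] &&
  [exists u in U, exists w in W, ~~ e u w].

Definition red_degree (P : {set {set T}}) (U : {set T}) : nat :=
  #|[set W in P | (W != U) && red_edge U W]|.

Definition max_red_degree (P : {set {set T}}) : nat :=
  \max_(U in P) red_degree P U.

Definition singleton_partition : {set {set T}} := [set [set x] | x : T].

Definition merge_step (P P' : {set {set T}}) : bool :=
  [exists U in P, exists W in P,
     (U != W) && (P' == (P :\ U :\ W) :|: [set U :|: W])].

Definition contraction_sequence (s : seq {set {set T}}) : Prop :=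
  exists rest, s = singleton_partition :: rest /\
    path merge_step singleton_partition rest /\
    #|last singleton_partition rest| = 1.

Definition cs_width (s : seq {set {set T}}) : nat :=
  \max_(P <- s) max_red_degree P.

Definition tww_is (d : nat) : Prop :=
  (exists s, contraction_sequence s /\ cs_width s = d) /\
  (forall s, contraction_sequence s -> d <= cs_width s).

Definition pair_partition (u v : T) : {set {set T}} :=
  [set [set u; v]] :|: [set [set x] | x in [set: T] :\ u :\ v].

(* lb_1: min over 2-subsets {u,v} of max red degree of G/P_{uv};
   0 if |V| = 1 (the default #|T| is never attained otherwise since red
   degrees are < #|T|). *)
Definition lb1 : nat :=
  if #|T| <= 1 then 0 else
  \big[minn/#|T|]_(u : T) \big[minn/#|T|]_(v : T | u != v)
     max_red_degree (pair_partition u v).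

End TwinWidth.

(* Kneser graph K(n,2): vertices are 2-element subsets of {0,...,n-1}
   (i.e. of {1..n} shifted), adjacent iff disjoint. *)
Definition kneser_vertex (n : nat) := {A : {set 'I_n} | #|A| == 2}.

Definition kneser_rel (n : nat) : rel (kneser_vertex n) :=
  fun A B => [disjoint val A & val B].
Arguments kneser_rel n : clear implicits.

From mathcomp Require Import all_boot zify.
Set Implicit Arguments. Unset Strict Implicit. Unset Printing Implicit Defensive.

(* Lower bound: whichever pair u, v is contracted first, the part {u, v} has a
   red edge to every singleton {y, x} with y in exactly one of u, v and x in
   neither; for n >= 5 there are at least 2(n - 3) of them, and the first
   contraction of any sequence is such a pair partition.
   Upper bound: an explicit sequence whose intermediate partitions consist of
   the block of all pairs inside [t, n), for each a < t the star of the pairs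
   {a, b} with b >= t, and singletons.  It moves from t to t - 1 by absorbing
   the singletons {k, t - 1} into the stars of k one at a time, and then
   merging the star of t - 1 into the block; no part ever has more than
   2(n - 3) red neighbours.  For n = 4 the graph is a perfect matching and
   contracting its edges first gives width 0; for n <= 3 it has no edges. *)

Section Quotients.
Variables (T : finType) (e : rel T).

Lemma red_edgeP (U W : {set T}) :
  reflect (exists u w u' w',
             [/\ u \in U, w \in W, u' \in U, w' \in W & e u w && ~~ e u' w'])
          (red_edge e U W).
Proof.
apply: (iffP andP) => [[/existsP[u /andP[uU /existsP[w /andP[wW euw]]]]
                        /existsP[u' /andP[u'U /existsP[w' /andP[w'W nuw]]]]]|].
  by exists u, w, u', w'; rewrite euw.
move=> [u [w [u' [w' [uU wW u'U w'W /andP[euw nuw]]]]]].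
split; apply/existsP; [exists u | exists u'];
  rewrite ?uU ?u'U; apply/existsP; [exists w | exists w']; rewrite ?wW ?w'W //.
Qed.

Lemma red_edge_set1 x y : red_edge e [set x] [set y] = false.
Proof.
apply/red_edgeP => -[u [w [u' [w' [/set1P-> /set1P-> /set1P-> /set1P->]]]]].
by case: (e x y).
Qed.

Lemma max_red_degree_singleton_partition :
  max_red_degree e (singleton_partition T) = 0.
Proof.
apply/eqP; rewrite -leqn0; apply/bigmax_leqP => _ /imsetP[x _ ->].
rewrite leqn0 cards_eq0; apply/eqP/setP => W; rewrite !inE.
by apply/negbTE/and3P => -[/imsetP[y _ ->] _]; rewrite red_edge_set1.
Qed.

Lemma max_red_degree_card1 (P : {set {set T}}) : #|P| = 1 -> max_red_degree e P = 0.
Proof.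
move/eqP/cards1P=> [U ->]; apply/eqP; rewrite -leqn0; apply/bigmax_leqP => _ /set1P->.
rewrite leqn0 cards_eq0; apply/eqP/setP => W.
by rewrite !inE; case: eqP => // ->; rewrite eqxx.
Qed.

Section Fibers.
Variable K : eqType.
Implicit Types L : T -> K.

Definition fiber L y := [set x | L x == L y].
Definition fibers L := [set fiber L y | y : T].

Lemma fiber_eq L y z : (fiber L y == fiber L z) = (L y == L z).
Proof.
apply/eqP/eqP => [/setP/(_ y)|E]; first by rewrite !inE eqxx => /esym/eqP.
by apply/setP=> x; rewrite !inE E.
Qed.

Lemma fibers_inj L : injective L -> fibers L = singleton_partition T.
Proof.
by move=> injL; apply: eq_imset => y; apply/setP => x; rewrite !inE (inj_eq injL).
Qed.

Lemma eq_fibers L L' :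
  (forall x z, (L' x == L' z) = (L x == L z)) -> fibers L' = fibers L.
Proof. by move=> E; apply: eq_imset => y; apply/setP => x; rewrite !inE E. Qed.

Lemma card_fibers_const L (y0 : T) : (forall x z, L x = L z) -> #|fibers L| = 1.
Proof.
move=> Lconst; apply/eqP/cards1P; exists (fiber L y0); apply/setP => U; rewrite !inE.
apply/imsetP/eqP => [[y _ ->]|->]; last by exists y0.
by apply/eqP; rewrite fiber_eq (Lconst y y0).
Qed.

Lemma merge_step_fibers L L' y1 y2 :
  L y1 != L y2 ->
  (forall x z, (L' x == L' z) =
     (L x == L z) || (L x \in [:: L y1; L y2]) && (L z \in [:: L y1; L y2])) ->
  merge_step (fibers L) (fibers L').
Proof.
move=> N12 L'E.
have fiberL' y : fiber L' y =
    if L y \in [:: L y1; L y2] then fiber L y1 :|: fiber L y2 else fiber L y.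
  apply/setP=> x; rewrite !inE L'E.
  case: ifP; rewrite !inE => Sy; rewrite Sy ?andbF ?orbF //.
  by rewrite andbT; case/orP: Sy => /eqP->; case: (L x == L y1); case: (L x == L y2).
apply/existsP; exists (fiber L y1); rewrite imset_f //=.
apply/existsP; exists (fiber L y2); rewrite imset_f //= fiber_eq N12 /=.
apply/eqP/setP=> U; rewrite !inE; apply/imsetP/idP => [[y _ ->]|].
  rewrite fiberL'; case: ifP => Sy; first by rewrite eqxx orbT.
  by move: Sy; rewrite imset_f // !fiber_eq !inE; case: eqP; case: eqP.
case/orP => [/and3P[N2 N1 /imsetP[y _ EU]]|/eqP ->].
  exists y => //; rewrite fiberL' EU; case: ifP => // Sy.
  by move: N1 N2 Sy; rewrite EU !fiber_eq !inE => /negbTE-> /negbTE->.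
by exists y1; rewrite // fiberL' !inE eqxx.
Qed.

Lemma max_red_degree_fibers_le L d (S : K -> seq K) :
  (forall y, size (S (L y)) <= d) ->
  (forall y z, L z != L y -> red_edge e (fiber L y) (fiber L z) -> L z \in S (L y)) ->
  max_red_degree e (fibers L) <= d.
Proof.
move=> sizeS redS; apply/bigmax_leqP => _ /imsetP[y _ ->].
apply: leq_trans (sizeS y); rewrite -(size_map (fun k => [set x | L x == k])).
apply: leq_trans (card_size _); apply: subset_leq_card; apply/subsetP => W.
rewrite inE => /and3P[/imsetP[z _ ->] Nzy R]; apply: map_f; apply: redS R.
by rewrite -fiber_eq.
Qed.

Lemma max_red_degree_fibers_eq0 L :
  (forall u w, e u w -> L u = L w \/
     (forall x, L x = L u -> x = u) /\ (forall x, L x = L w -> x = w)) ->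
  max_red_degree e (fibers L) = 0.
Proof.
move=> edgeL; apply/eqP; rewrite -leqn0.
apply: (@max_red_degree_fibers_le _ _ (fun=> [::])) => // y z Nzy.
case/red_edgeP=> [u [w [u' [w' [uy wz u'y w'z /andP[euw]]]]]].
rewrite !inE in uy wz u'y w'z.
case: (edgeL u w euw) => [Euw|[fu fw]].
  by move: Nzy; rewrite -(eqP uy) -(eqP wz) Euw eqxx.
have -> : u' = u by apply: fu; rewrite (eqP uy) (eqP u'y).
have -> : w' = w by apply: fw; rewrite (eqP wz) (eqP w'z).
by rewrite euw.
Qed.

End Fibers.

Section Contraction.
Implicit Types P Q : {set {set T}}.

Definition contractible d P :=
  exists rest, [/\ path (@merge_step T) P rest, #|last P rest| = 1
                 & {in rest, forall Q, max_red_degree e Q <= d}].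

Lemma contractible1 d P : #|P| = 1 -> contractible d P.
Proof. by exists [::]. Qed.

Lemma contractible_merge d P P' :
  merge_step P P' -> max_red_degree e P' <= d -> contractible d P' -> contractible d P.
Proof.
move=> PP' P'd [rest [path_rest last_rest rest_d]].
exists (P' :: rest); split; rewrite /= ?PP' //.
by move=> Q; rewrite inE => /predU1P[->|/rest_d].
Qed.

Lemma contraction_sequence_of_contractible d :
  contractible d (singleton_partition T) ->
  exists2 s, contraction_sequence s & cs_width e s <= d.
Proof.
move=> [rest [path_rest last_rest rest_d]].
exists (singleton_partition T :: rest); first by exists rest.
apply/bigmax_leqP_seq => P + _; rewrite inE => /predU1P[->|/rest_d //].
by rewrite max_red_degree_singleton_partition.
Qed.

End Contraction.

Lemma geq_bigmin_cond (I : finType) (P : pred I) (F : I -> nat) x0 i :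
  P i -> \big[minn/x0]_(j | P j) F j <= F i.
Proof.
move=> Pi; have : i \in index_enum I by rewrite mem_index_enum.
elim: (index_enum I) => // j r IHr; rewrite inE big_cons => /predU1P[<-|ir].
  by rewrite Pi geq_minl.
by case: (P j); rewrite ?(leq_trans (geq_minr _ _)) // IHr.
Qed.

Lemma merge_step_singleton_partition P :
  merge_step (singleton_partition T) P -> exists u v, u != v /\ P = pair_partition u v.
Proof.
case/existsP=> _ /andP[/imsetP[u _ ->] /existsP[_ /andP[/imsetP[v _ ->]]]].
rewrite (inj_eq set1_inj) => /andP[Nuv /eqP->]; exists u, v; split=> //.
apply/setP=> U; rewrite /pair_partition !inE orbC; congr (_ || _).
apply/and3P/imsetP => [[NU NV /imsetP[x _ EU]]|[x]].
  by exists x; rewrite // !inE; move: NU NV; rewrite EU !(inj_eq set1_inj) => -> ->.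
rewrite !inE => /andP[Nxv /andP[Nxu _]] ->.
by rewrite !(inj_eq set1_inj) Nxu Nxv imset_f.
Qed.

Lemma lb1_le_cs_width s : contraction_sequence s -> lb1 e <= cs_width e s.
Proof.
case=> rest [-> [path_rest last_rest]]; rewrite /lb1; case: (leqP #|T| 1) => // T2.
case: rest path_rest last_rest => [_|P rest /andP[P1 _] _].
  by rewrite /= card_imset => [T1|]; [move: T2; rewrite T1 | exact: set1_inj].
have [u [v [Nuv ->]]] := merge_step_singleton_partition P1.
apply: leq_trans (@geq_bigmin_cond _ xpredT _ _ u isT) _.
apply: leq_trans (@geq_bigmin_cond _ (fun v => u != v) _ _ v Nuv) _.
by apply: leq_bigmax_seq; rewrite ?inE ?eqxx ?orbT.
Qed.

Definition distinguishers u v := [set w | [&& w != u, w != v & e u w (+) e v w]].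

Lemma card_distinguishers_le u v :
  #|distinguishers u v| <= max_red_degree e (pair_partition u v).
Proof.
have uv_in : [set u; v] \in pair_partition u v by rewrite !inE eqxx.
apply: leq_trans (leq_bigmax_cond _ uv_in); rewrite -(card_imset _ set1_inj).
apply: subset_leq_card; apply/subsetP => _ /imsetP[w + ->].
rewrite !inE => /and3P[Nwu Nwv uvw]; rewrite imset_f ?inE ?Nwu ?Nwv ?orbT //=.
apply/andP; split.
  apply: contraNneq Nwu => wE; have : u \in [set w] by rewrite wE !inE eqxx.
  by rewrite inE eq_sym.
apply/red_edgeP; case euw: (e u w) in uvw; rewrite /= ?negbK in uvw.
  by exists u, w, v, w; rewrite !inE !eqxx ?orbT euw uvw.
by exists v, w, u, w; rewrite !inE !eqxx ?orbT euw uvw.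
Qed.

Lemma max_red_degree_pair_partition_le_card u v :
  max_red_degree e (pair_partition u v) <= #|T|.
Proof.
pose f x := if x \in [set u; v] then [set u; v] else [set x].
have sub_f : pair_partition u v \subset f @: T.
  apply/subsetP => U; rewrite !inE => /predU1P[->|/imsetP[x]].
    by apply/imsetP; exists u; rewrite /f ?inE ?eqxx.
  rewrite !inE => /andP[Nxv /andP[Nxu _]] ->; apply/imsetP; exists x => //.
  by rewrite /f !inE (negbTE Nxu) (negbTE Nxv).
apply/bigmax_leqP => U _; apply: leq_trans (leq_imset_card f T).
apply: leq_trans (subset_leq_card sub_f); apply: subset_leq_card.
by apply/subsetP => W; rewrite inE => /andP[].
Qed.

Lemma leq_lb1 d :
  1 < #|T| -> (forall u v, u != v -> d <= max_red_degree e (pair_partition u v)) ->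
  d <= lb1 e.
Proof.
move=> T2 pair_d; rewrite /lb1 ifN -?ltnNge //.
have [u0 [v0 [_ _ Nuv0]]] := card_gt1P T2.
(* needed because lb1 starts its minima from #|T| *)
have d_T := leq_trans (pair_d _ _ Nuv0) (max_red_degree_pair_partition_le_card u0 v0).
elim/big_ind: _ => // [a b da db|u _]; first by rewrite leq_min da db.
by elim/big_ind: _ => // [a b da db|v]; [rewrite leq_min da db | exact: pair_d].
Qed.

Lemma tww_is_lb1 d :
  contractible d (singleton_partition T) -> d <= lb1 e ->
  tww_is e (lb1 e) /\ lb1 e = d.
Proof.
move=> /contraction_sequence_of_contractible[s s_cs s_d] d_lb1.
have lb1_s := lb1_le_cs_width s_cs.
have lb1E : lb1 e = d by apply/eqP; rewrite eqn_leq d_lb1 (leq_trans lb1_s s_d).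
split=> //; split=> [|s'/lb1_le_cs_width//]; exists s; split=> //.
by apply/eqP; rewrite eqn_leq lb1_s lb1E s_d.
Qed.

End Quotients.

Section KneserCoordinates.
Variable n : nat.
Implicit Types A B : kneser_vertex n.

Definition kneser_elems A := [seq val i | i <- enum (val A)].
Definition lo A := nth 0 (kneser_elems A) 0.
Definition hi A := nth 0 (kneser_elems A) 1.

Lemma kneser_elemsE A : kneser_elems A = [:: lo A; hi A].
Proof.
have : size (kneser_elems A) = 2 by rewrite size_map -cardE (eqP (valP A)).
by rewrite /lo /hi; case: (kneser_elems A) => [|a [|b []]].
Qed.

Lemma lo_lt_hi A : lo A < hi A.
Proof.
have : sorted ltn (kneser_elems A).
  rewrite /kneser_elems -[enum _](eq_filter (mem_enum _)).
  rewrite -(eq_filter (mem_map val_inj _)) -filter_map.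
  by rewrite (sorted_filter ltn_trans) // unlock val_ord_enum iota_ltn_sorted.
by rewrite kneser_elemsE /= andbT.
Qed.

Lemma mem_kneser_vertex A (x : 'I_n) : (x \in val A) = (val x == lo A) || (val x == hi A).
Proof. by rewrite -mem_enum -(mem_map val_inj) -/(kneser_elems A) kneser_elemsE !inE. Qed.

Lemma hi_lt A : hi A < n.
Proof.
suff /mapP[i _ ->] : hi A \in kneser_elems A by exact: ltn_ord.
by rewrite kneser_elemsE !inE eqxx orbT.
Qed.

Lemma kneser_relE A B :
  kneser_rel n A B = [&& lo A != lo B, lo A != hi B, hi A != lo B & hi A != hi B].
Proof.
have ltA := lo_lt_hi A; have hA := hi_lt A.
apply/idP/and4P => [disAB|[ne1 ne2 ne3 ne4]].
  have notB k (kn : k < n) : (k == lo A) || (k == hi A) -> (k != lo B) && (k != hi B).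
    move=> kA; have := disjointFr disAB (_ : Ordinal kn \in val A).
    by rewrite !mem_kneser_vertex /= kA -negb_or => /(_ isT) ->.
  have := notB _ (ltn_trans ltA hA); have := notB _ hA.
  by rewrite !eqxx orbT => /(_ isT) /andP[-> ->] /(_ isT) /andP[-> ->].
apply/pred0P => x /=; rewrite !mem_kneser_vertex.
by apply/negbTE/andP => -[/orP[]/eqP-> /orP[]/eqP E]; rewrite E eqxx in ne1 ne2 ne3 ne4.
Qed.

Lemma kneser_vertex_inj A B : lo A = lo B -> hi A = hi B -> A = B.
Proof.
by move=> lo_eq hi_eq; apply/val_inj/setP => x; rewrite !mem_kneser_vertex lo_eq hi_eq.
Qed.

Lemma exists_kneser_vertex a b : a < b -> b < n -> exists A, lo A = a /\ hi A = b.
Proof.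
move=> ab bn; have an : a < n by apply: ltn_trans bn.
pose a' := Ordinal an; pose b' := Ordinal bn.
have card_ab : #|[set a'; b']| == 2.
  by rewrite cards2 -val_eqE /= neq_ltn ab.
pose A : kneser_vertex n := exist (fun S : {set 'I_n} => #|S| == 2) _ card_ab.
exists A; have lt := lo_lt_hi A.
have memA (x : 'I_n) : (x \in [set a'; b']) = (val x == lo A) || (val x == hi A).
  by rewrite -mem_kneser_vertex.
have lo_n := ltn_trans lt (hi_lt A).
have ha : (a == lo A) || (a == hi A) by rewrite -(memA a') !inE eqxx.
have hb : (b == lo A) || (b == hi A) by rewrite -(memA b') !inE eqxx orbT.
have hl : (lo A == a) || (lo A == b).
  by move: (memA (Ordinal lo_n)); rewrite /= eqxx !inE -!val_eqE => ->.
have hh : (hi A == a) || (hi A == b).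
  by move: (memA (Ordinal (hi_lt A))); rewrite /= eqxx orbT !inE -!val_eqE => ->.
by move: ha hb hl hh => /orP[]/eqP ? /orP[]/eqP ? /orP[]/eqP ? /orP[]/eqP ?; lia.
Qed.

Lemma card_kneser_vertex_gt1 : 2 < n -> 1 < #|{: kneser_vertex n}|.
Proof.
move=> n3; apply/card_gt1P.
have [A [loA hiA]] : exists A, lo A = 0 /\ hi A = 1 by apply: exists_kneser_vertex; lia.
have [B [loB hiB]] : exists B, lo B = 0 /\ hi B = 2 by apply: exists_kneser_vertex; lia.
by exists A, B; split=> //; apply: contra_neq (_ : hi A != hi B) => [->|]; rewrite ?hiA ?hiB.
Qed.

End KneserCoordinates.

Section KneserDistinguishers.
Variables (n : nat) (u v : kneser_vertex n).
Hypothesis Nuv : u != v.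

Let A := val u.
Let B := val v.
Let D := (A :|: B) :\: (A :&: B).
Let C := ~: (A :|: B).
(* u is only a default value: on D x C the set [set p.1; p.2] has two elements *)
Let vertex_of (p : 'I_n * 'I_n) : kneser_vertex n := insubd u [set p.1; p.2].

Lemma val_vertex_of y x : y \in A :|: B -> x \in C -> val (vertex_of (y, x)) = [set y; x].
Proof.
move=> yAB xC; rewrite insubdK // unfold_in cards2 /=.
have Nyx : y != x by apply: contraTneq xC => <-; rewrite inE yAB.
by rewrite Nyx.
Qed.

Lemma vertex_of_inj : {in setX D C &, injective vertex_of}.
Proof.
move=> [y x] [y' x']; rewrite !in_setX !in_setD /=.
move=> /andP[/andP[_ yAB] xC] /andP[/andP[_ y'AB] x'C].
move=> /(congr1 val); rewrite !val_vertex_of // => E.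
have xAB : x \notin A :|: B by rewrite -in_setC.
have x'AB : x' \notin A :|: B by rewrite -in_setC.
have : y \in [set y'; x'] by rewrite -E !inE eqxx.
rewrite !inE => /predU1P[eyy'|/eqP eyx']; last by rewrite -eyx' yAB in x'AB.
have : x \in [set y'; x'] by rewrite -E !inE eqxx orbT.
rewrite !inE => /predU1P[exy'|/eqP->]; last by rewrite eyy'.
by rewrite exy' y'AB in xAB.
Qed.

Lemma card_setI_le1 : #|A :&: B| <= 1.
Proof.
rewrite leqNgt; apply: contra Nuv => AB2; apply/eqP/val_inj.
have cardA : #|A| = 2 by apply/eqP; exact: valP u.
have cardB : #|B| = 2 by apply/eqP; exact: valP v.
have AB_A : A :&: B = A by apply/eqP; rewrite eqEcard subsetIl cardA.
have AB_B : A :&: B = B by apply/eqP; rewrite eqEcard subsetIr cardB.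
by rewrite -/A -/B -AB_A AB_B.
Qed.

Lemma card_vertex_of : 5 <= n -> 2 * (n - 3) <= #|vertex_of @: setX D C|.
Proof.
move=> n5; rewrite card_in_imset; last exact: vertex_of_inj.
have cardA : #|A| = 2 by apply/eqP; exact: valP u.
have cardB : #|B| = 2 by apply/eqP; exact: valP v.
have cardD : #|D| = #|A :|: B| - #|A :&: B|.
  by rewrite cardsD (setIidPr (subset_trans (subsetIl A B) (subsetUl A B))).
have cardC : #|C| = n - #|A :|: B| by have := cardsC (A :|: B); rewrite card_ord -/C; lia.
have := cardsU A B; have := card_setI_le1.
rewrite cardsX cardD cardC cardA cardB => + ->.
by case: #|A :&: B| => [|[|]] // _; lia.
Qed.

Lemma vertex_of_distinguishes p :
  p \in setX D C -> vertex_of p \in distinguishers (kneser_rel n) u v.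
Proof.
case: p => y x; rewrite in_setX in_setD => /andP[/andP[yAB' yAB] xC] /=.
have : x \notin A :|: B by rewrite -in_setC.
rewrite inE => /norP[xA xB].
have Nw (Z : kneser_vertex n) : x \notin val Z -> vertex_of (y, x) != Z.
  by apply: contraNneq => <-; rewrite val_vertex_of // !inE eqxx orbT.
have disj (Z : {set 'I_n}) : [disjoint Z & [set y; x]] = (y \notin Z) && (x \notin Z).
  by rewrite disjoint_sym disjoints_subset subUset !sub1set !inE.
rewrite inE Nw ?Nw //= /kneser_rel val_vertex_of // !disj -/A -/B xA xB !andbT.
by move: yAB' yAB; rewrite !inE; case: (y \in A); case: (y \in B).
Qed.

End KneserDistinguishers.

Lemma kneser_max_red_degree_pair_partition n (u v : kneser_vertex n) :
  5 <= n -> u != v -> 2 * (n - 3) <= max_red_degree (kneser_rel n) (pair_partition u v).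
Proof.
move=> n5 Nuv; apply: leq_trans (card_distinguishers_le _ u v).
apply: leq_trans (card_vertex_of Nuv n5) _; apply: subset_leq_card.
by apply/subsetP => _ /imsetP[p pDC ->]; exact: vertex_of_distinguishes.
Qed.

Ltac label_arith :=
  repeat (case: ifP; rewrite ?xpair_eqE => ?); try apply/eqP; rewrite ?xpair_eqE; lia.

(* Label of the pair {a < b} at stage (t, k): (t, t) for the block, (a, t)
   for the star of a, which contains {a, t - 1} once a < k, and (a, b) for a
   singleton. *)
Definition stage_label (t k a b : nat) : nat * nat :=
  if t <= a then (t, t)
  else if (t <= b) || (b == t.-1) && (a < k) then (a, t)
  else (a, b).

(* Possible red neighbours of the part labelled l at stage (t, k).  For a star
   c < k they are the other stars below t - 1, the singletons {a, t - 1} with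
   a >= k and, only when [t, n) has two points, the star of t - 1 and the
   block: this is where the bound 2(n - 3) is attained. *)
Definition red_candidates n t k (l : nat * nat) : seq (nat * nat) :=
  let: (c, r) := l in
  if r != t then [seq (a, t) | a <- iota 0 t]
  else if c < k then
    [seq (a, t) | a <- rem c (iota 0 t.-1)] ++ [seq (a, t.-1) | a <- iota k (t.-1 - k)]
    ++ (if t.+1 < n then [:: (t.-1, t); (t, t)] else [::])
  else if c < t then [seq (a, t) | a <- rem c (iota 0 t)] ++ [:: (t, t)]
  else [seq (a, t) | a <- iota 0 t].

Lemma mem_map_pair (s : seq nat) (p q t : nat) :
  ((p, q) \in [seq (a, t) | a <- s]) = (q == t) && (p \in s).
Proof.
apply/mapP/andP => [[a ps [-> ->]]|[/eqP-> ps]]; first by rewrite eqxx.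
by exists p.
Qed.

Lemma mem_red_candidates n t k c r p q :
  ((p, q) \in red_candidates n t k (c, r)) =
  if r != t then (q == t) && (p < t)
  else if c < k then
    [|| (q == t) && (p != c) && (p < t.-1), (q == t.-1) && (k <= p < t.-1)
      | (t.+1 < n) && ((q == t) && ((p == t.-1) || (p == t)))]
  else if c < t then (q == t) && (p != c) && (p < t) || (p == t) && (q == t)
  else (q == t) && (p < t).
Proof.
rewrite /red_candidates; case: ifP => _; first by rewrite mem_map_pair mem_iota.
have mem_rem_iota m : (p \in rem c (iota 0 m)) = (p != c) && (p < m).
  by rewrite mem_rem_uniq ?iota_uniq // !inE mem_iota.
case: ifP => _; last case: ifP => _; rewrite ?mem_cat ?mem_map_pair ?mem_rem_iota ?mem_iota.
- by case: ifP => _; rewrite ?inE ?xpair_eqE /= ?orbF; lia.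
- by rewrite inE xpair_eqE; lia.
- by lia.
Qed.

Variant stage_label_spec t k a b : nat * nat -> Prop :=
  | StageTop of t <= a : stage_label_spec t k a b (t, t)
  | StageStar of a < t & t.-1 <= b & (b == t.-1) ==> (a < k) :
      stage_label_spec t k a b (a, t)
  | StageSingle of b < t & (b == t.-1) ==> (k <= a) :
      stage_label_spec t k a b (a, b).

Lemma stage_labelP t k a b : a < b -> stage_label_spec t k a b (stage_label t k a b).
Proof.
rewrite /stage_label => ab; case: (leqP t a) => [ta|a_t]; first exact: StageTop.
case: ifP => [star|/negbT nstar]; [apply: StageStar | apply: StageSingle]; lia.
Qed.

Lemma stage_label_topE t k a b : a < b -> (stage_label t k a b == (t, t)) = (t <= a).
Proof. by move=> ab; case: stage_labelP => // *; rewrite xpair_eqE; lia. Qed.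

Lemma stage_label_starE t k a b c : a < b -> c < t ->
  (stage_label t k a b == (c, t)) = [&& a == c, t.-1 <= b & (b == t.-1) ==> (c < k)].
Proof. by move=> ab ct; case: stage_labelP => // *; rewrite xpair_eqE; lia. Qed.

Lemma stage_label_singleE t k a b c r : a < b -> r < t ->
  (stage_label t k a b == (c, r)) = [&& a == c, b == r & (r == t.-1) ==> (k <= c)].
Proof. by move=> ab rt; case: stage_labelP => // *; rewrite xpair_eqE; lia. Qed.

Lemma stage_red_candidate n t k a1 b1 a2 b2 a3 b3 a4 b4 :
  0 < t < n -> k < t ->
  a1 < b1 < n -> a2 < b2 < n -> a3 < b3 < n -> a4 < b4 < n ->
  stage_label t k a3 b3 == stage_label t k a1 b1 ->
  stage_label t k a4 b4 == stage_label t k a2 b2 ->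
  stage_label t k a2 b2 != stage_label t k a1 b1 ->
  [&& a1 != a2, a1 != b2, b1 != a2 & b1 != b2] ->
  [|| a3 == a4, a3 == b4, b3 == a4 | b3 == b4] ->
  stage_label t k a2 b2 \in red_candidates n t k (stage_label t k a1 b1).
Proof.
move=> /andP[t0 tn] kt /andP[ab1 b1n] /andP[ab2 b2n] /andP[ab3 b3n] /andP[ab4 b4n].
case: (stage_labelP t k ab1) => [ta1|a1t tb1 kb1|b1t kb1];
case: (stage_labelP t k ab2) => [ta2|a2t tb2 kb2|b2t kb2];
rewrite ?stage_label_topE ?stage_label_starE ?stage_label_singleE //.
all: rewrite mem_red_candidates ?xpair_eqE ?eqxx /=.
- by [].
- by move=> *; rewrite !ifN; lia.
- by move=> ta3 /and3P[/eqP-> /eqP-> _] _ _ /or4P[]/eqP; lia.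
- by move=> _ ta4 _ _ _; repeat case: ifP; lia.
- by move=> _ _ Na12 /and4P[_ _ ? ?] _; repeat case: ifP; lia.
- move=> /and3P[/eqP-> tb3 kb3] /and3P[/eqP-> /eqP-> _] _ /and4P[? ? _ _].
  by case/or4P=> /eqP ?; repeat case: ifP; lia.
- by move=> /and3P[/eqP-> /eqP-> _] ta4 _ _ /or4P[]/eqP; lia.
- by rewrite ifT; lia.
- move=> /and3P[/eqP-> /eqP-> _] /and3P[/eqP-> /eqP-> _] _ /and4P[? ? ? ?].
  by case/or4P=> /eqP; lia.
Qed.

Lemma size_red_candidates n t k l :
  5 <= n -> t < n -> k < t -> size (red_candidates n t k l) <= 2 * (n - 3).
Proof.
case: l => c r n5 tn kt; rewrite /red_candidates; case: ifP => _.
  by rewrite size_map size_iota; lia.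
case: ifP => ck; last case: ifP => ct.
- rewrite !size_cat !size_map size_rem ?mem_iota ?size_iota; last lia.
  by case: ifP => /= ?; lia.
- by rewrite size_cat size_map size_rem ?mem_iota ?size_iota /=; lia.
- by rewrite size_map size_iota; lia.
Qed.

Definition absorb t k (l : nat * nat) := if l == (k, t.-1) then (k, t) else l.
Definition descend t (l : nat * nat) := if l.2 == t then (minn l.1 t.-1, t.-1) else l.

Lemma stage_label_absorb t k a b :
  stage_label t k.+1 a b = absorb t k (stage_label t k a b).
Proof. by rewrite /stage_label; repeat case: ifP => ?; rewrite /absorb; label_arith. Qed.

Lemma eq_absorb t k l l' : 0 < t ->
  (absorb t k l == absorb t k l') =
  (l == l') || (l \in [:: (k, t.-1); (k, t)]) && (l' \in [:: (k, t.-1); (k, t)]).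
Proof. by case: l l' => [p q] [p' q'] t0; rewrite /absorb !inE; label_arith. Qed.

Lemma stage_label_descend t a b : a < b ->
  stage_label t.-1 0 a b = descend t (stage_label t t.-1 a b).
Proof.
by move=> ab; rewrite /stage_label; repeat case: ifP => ?; rewrite /descend /=; label_arith.
Qed.

Lemma eq_descend_stage_label t a b a' b' : a < b -> a' < b' ->
  (descend t (stage_label t t.-1 a b) == descend t (stage_label t t.-1 a' b')) =
  (stage_label t t.-1 a b == stage_label t t.-1 a' b') ||
  (stage_label t t.-1 a b \in [:: (t.-1, t); (t, t)]) &&
  (stage_label t t.-1 a' b' \in [:: (t.-1, t); (t, t)]).
Proof.
move=> ab ab'; case: (stage_labelP t t.-1 ab); case: (stage_labelP t t.-1 ab') => *.
all: rewrite /descend /= !inE; label_arith.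
Qed.

Lemma eq_descend_stage_label_top t a b a' b' : a < b <= t -> a' < b' <= t ->
  (descend t (stage_label t t.-1 a b) == descend t (stage_label t t.-1 a' b')) =
  (stage_label t t.-1 a b == stage_label t t.-1 a' b').
Proof.
move=> /andP[ab bt] /andP[ab' bt']; rewrite eq_descend_stage_label //.
case: (stage_labelP t t.-1 ab); case: (stage_labelP t t.-1 ab') => *.
all: rewrite !inE; label_arith.
Qed.

Section KneserStages.
Variable n : nat.
Notation V := (kneser_vertex n).

Definition stage t k (A : V) := stage_label t k (lo A) (hi A).

Lemma stage_discrete : fibers (stage n.-1 0) = singleton_partition V.
Proof.
apply: fibers_inj => A B; rewrite /stage.
have stageE (C : V) : stage_label n.-1 0 (lo C) (hi C) = (lo C, hi C).
  by have := lo_lt_hi C; have := hi_lt C; rewrite /stage_label => ? ?; label_arith.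
by rewrite !stageE => -[]; exact: kneser_vertex_inj.
Qed.

Lemma card_fibers_stage00 : 1 < n -> #|fibers (stage 0 0)| = 1.
Proof.
move=> n2; have [A _] := exists_kneser_vertex (ltnSn 0) n2.
by apply: (card_fibers_const A) => B C; rewrite /stage /stage_label.
Qed.

Lemma merge_step_absorb t k : t < n -> k.+1 < t ->
  merge_step (fibers (stage t k)) (fibers (stage t k.+1)).
Proof.
move=> tn kt.
have [y1 [lo1 hi1]] : exists A : V, lo A = k /\ hi A = t.-1 by apply: exists_kneser_vertex; lia.
have [y2 [lo2 hi2]] : exists A : V, lo A = k /\ hi A = t by apply: exists_kneser_vertex; lia.
have L1 : stage t k y1 = (k, t.-1) by rewrite /stage lo1 hi1 /stage_label; label_arith.
have L2 : stage t k y2 = (k, t) by rewrite /stage lo2 hi2 /stage_label; label_arith.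
apply: (merge_step_fibers (y1 := y1) (y2 := y2)) => [|x z]; rewrite L1 L2.
  by rewrite xpair_eqE; lia.
by rewrite /stage !stage_label_absorb eq_absorb //; lia.
Qed.

Lemma merge_step_descend t : t.+2 < n ->
  merge_step (fibers (stage t.+1 t)) (fibers (stage t 0)).
Proof.
move=> tn.
have [y1 [lo1 hi1]] : exists A : V, lo A = t /\ hi A = t.+1 by apply: exists_kneser_vertex; lia.
have [y2 [lo2 hi2]] : exists A : V, lo A = t.+1 /\ hi A = t.+2 by apply: exists_kneser_vertex; lia.
have L1 : stage t.+1 t y1 = (t, t.+1) by rewrite /stage lo1 hi1 /stage_label; label_arith.
have L2 : stage t.+1 t y2 = (t.+1, t.+1) by rewrite /stage lo2 hi2 /stage_label; label_arith.
apply: (merge_step_fibers (y1 := y1) (y2 := y2)) => [|x z]; rewrite L1 L2.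
  by rewrite xpair_eqE; lia.
by rewrite /stage !(stage_label_descend t.+1) ?lo_lt_hi // eq_descend_stage_label ?lo_lt_hi.
Qed.

Lemma fibers_descend_top t : t.+2 = n -> fibers (stage t 0) = fibers (stage t.+1 t).
Proof.
move=> tn; apply: eq_fibers => x z.
rewrite /stage !(stage_label_descend t.+1) ?lo_lt_hi // eq_descend_stage_label_top //.
all: by rewrite lo_lt_hi -ltnS tn hi_lt.
Qed.

Lemma max_red_degree_stage t k : 5 <= n -> 0 < t < n -> k < t ->
  max_red_degree (kneser_rel n) (fibers (stage t k)) <= 2 * (n - 3).
Proof.
move=> n5 tn kt; apply: (@max_red_degree_fibers_le _ _ _ _ _ (red_candidates n t k)).
  by move=> y; apply: size_red_candidates; lia.
move=> y z Nzy /red_edgeP[u [w [u' [w' [uy wz u'y w'z /andP[euw nuw]]]]]].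
rewrite !inE in uy wz u'y w'z; rewrite -(eqP uy) -(eqP wz).
have Eu : stage t k u' == stage t k u by rewrite (eqP u'y) (eqP uy).
have Ew : stage t k w' == stage t k w by rewrite (eqP w'z) (eqP wz).
have Nwu : stage t k w != stage t k u by rewrite (eqP wz) (eqP uy).
rewrite kneser_relE in euw; rewrite kneser_relE !negb_and !negbK in nuw.
by apply: (stage_red_candidate (a3 := lo u') (b3 := hi u') (a4 := lo w') (b4 := hi w'));
  rewrite ?lo_lt_hi ?hi_lt.
Qed.

Lemma max_red_degree_stage_small t k : n <= 3 ->
  max_red_degree (kneser_rel n) (fibers (stage t k)) = 0.
Proof.
move=> n3; apply: max_red_degree_fibers_eq0 => u w; rewrite kneser_relE.
by have := lo_lt_hi u; have := hi_lt u; have := lo_lt_hi w; have := hi_lt w; lia.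
Qed.

Section Contraction.
Variable d : nat.
Hypothesis n2 : 1 < n.
Hypothesis stage_width : forall t k, 0 < t < n -> k < t ->
  max_red_degree (kneser_rel n) (fibers (stage t k)) <= d.

Lemma contractible_stage t : t < n -> contractible (kneser_rel n) d (fibers (stage t 0)).
Proof.
elim: t => [_|t IHt t1n]; first by apply: contractible1; exact: card_fibers_stage00.
have width_t0 : max_red_degree (kneser_rel n) (fibers (stage t 0)) <= d.
  case: t {IHt} t1n => [|t] tn; first by rewrite max_red_degree_card1 ?card_fibers_stage00.
  by apply: stage_width; lia.
have top : contractible (kneser_rel n) d (fibers (stage t.+1 t)).
  have [t2n|t2n] : t.+2 < n \/ t.+2 = n by lia.
    exact: contractible_merge (merge_step_descend t2n) width_t0 (IHt (ltnW t1n)).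
  by rewrite -fibers_descend_top //; apply: IHt; lia.
suff absorb i : i <= t -> contractible (kneser_rel n) d (fibers (stage t.+1 (t - i))).
  by move/(_ t (leqnn t)): absorb; rewrite subnn.
elim: i => [_|i IHi it]; first by rewrite subn0.
have ti : t - i = (t - i.+1).+1 by lia.
rewrite ti in IHi.
by apply: contractible_merge (merge_step_absorb _ _) (stage_width _ _) (IHi _); lia.
Qed.

Lemma kneser_contractible : contractible (kneser_rel n) d (singleton_partition V).
Proof. by rewrite -stage_discrete; apply: contractible_stage; lia. Qed.

End Contraction.
End KneserStages.

Section KneserFour.
Notation V := (kneser_vertex 4).

(* K(4, 2) is the perfect matching {0, i} -- [4] \ {0, i}: match_index A is
   the i of the edge through A and match_side A tells its endpoints apart. *)
Definition match_index (A : V) := if lo A == 0 then hi A else 6 - lo A - hi A.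
Definition match_side (A : V) := (lo A == 0).+1.

Lemma match_index_bounds A : 0 < match_index A < 4.
Proof. by have := lo_lt_hi A; have := hi_lt A; rewrite /match_index; case: ifP; lia. Qed.

Lemma match_index_adj A B : kneser_rel 4 A B -> match_index A = match_index B.
Proof.
have := lo_lt_hi A; have := hi_lt A; have := lo_lt_hi B; have := hi_lt B.
by rewrite kneser_relE /match_index; case: ifP; case: ifP; lia.
Qed.

Lemma match_inj A B : match_index A = match_index B -> match_side A = match_side B -> A = B.
Proof.
have := lo_lt_hi A; have := hi_lt A; have := lo_lt_hi B; have := hi_lt B.
rewrite /match_index /match_side => ? ? ? ? mAB sAB; apply: kneser_vertex_inj;
  move: mAB sAB; case: ifP; case: ifP; lia.
Qed.

Lemma exists_match i s : 0 < i < 4 -> 0 < s < 3 ->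
  exists A, match_index A = i /\ match_side A = s.
Proof.
move=> /andP[i0 i4] /andP[s0 s3].
have [a [b [ab b4 mi ms]]] : exists a b,
    [/\ a < b, b < 4, (if a == 0 then b else 6 - a - b) = i & (a == 0).+1 = s].
  case: i i0 i4 => [|[|[|[|]]]] // _ _; case: s s0 s3 => [|[|[|]]] // _ _;
  first [by exists 0, 1 | by exists 2, 3 | by exists 0, 2 | by exists 1, 3
        | by exists 0, 3 | by exists 1, 2].
have [A [loA hiA]] := exists_kneser_vertex ab b4.
by exists A; rewrite /match_index /match_side loA hiA.
Qed.

Definition matching_label j (A : V) :=
  (match_index A, if match_index A <= j then 0 else match_side A).
Definition matching_block i (A : V) := (maxn (match_index A) i, 0).

Lemma matching_label_discrete : fibers (matching_label 0) = singleton_partition V.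
Proof.
apply: fibers_inj => A B; rewrite /matching_label.
have pos (C : V) : (match_index C <= 0) = false by have := match_index_bounds C; lia.
by rewrite !pos /=; case=> mAB sAB; apply: match_inj; rewrite // /match_side sAB.
Qed.

Lemma matching_label_block : fibers (matching_label 3) = fibers (matching_block 1).
Proof.
apply: eq_fibers => A B; rewrite /matching_label /matching_block.
by have := match_index_bounds A; have := match_index_bounds B => ? ?; label_arith.
Qed.

Lemma card_fibers_block : #|fibers (matching_block 3)| = 1.
Proof.
have [A _] := exists_match (isT : 0 < 1 < 4) (isT : 0 < 1 < 3).
apply: (card_fibers_const A) => B C; rewrite /matching_block.
by have := match_index_bounds B; have := match_index_bounds C => ? ?; label_arith.
Qed.

Lemma merge_step_matching_label j : j < 3 ->
  merge_step (fibers (matching_label j)) (fibers (matching_label j.+1)).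
Proof.
move=> j3; have j14 : 0 < j.+1 < 4 by lia.
have [y1 [m1 s1]] := exists_match j14 (isT : 0 < 1 < 3).
have [y2 [m2 s2]] := exists_match j14 (isT : 0 < 2 < 3).
apply: (merge_step_fibers (y1 := y1) (y2 := y2)) => [|A B];
  rewrite /matching_label m1 m2 s1 s2 ltnn ?inE ?xpair_eqE ?eqxx //=.
have sA : 0 < match_side A < 3 by rewrite /match_side; case: (lo A == 0).
have sB : 0 < match_side B < 3 by rewrite /match_side; case: (lo B == 0).
by label_arith.
Qed.

Lemma merge_step_matching_block i : 0 < i < 3 ->
  merge_step (fibers (matching_block i)) (fibers (matching_block i.+1)).
Proof.
move=> i13; have [y1 [m1 _]] : exists A, match_index A = i /\ match_side A = 1.
  by apply: exists_match; lia.
have [y2 [m2 _]] : exists A, match_index A = i.+1 /\ match_side A = 1.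
  by apply: exists_match; lia.
apply: (merge_step_fibers (y1 := y1) (y2 := y2)) => [|A B];
  rewrite /matching_block m1 m2 ?inE; rewrite ?xpair_eqE ?eqxx ?andbT; lia.
Qed.

Lemma matching_label_red_free j :
  max_red_degree (kneser_rel 4) (fibers (matching_label j)) = 0.
Proof.
apply: max_red_degree_fibers_eq0 => u w /match_index_adj muw.
rewrite /matching_label muw; case: leqP => mj; [left | right] => //.
by split=> x [mx]; rewrite mx leqNgt mj => sx; apply: match_inj; rewrite // mx ?muw.
Qed.

Lemma matching_block_red_free i :
  max_red_degree (kneser_rel 4) (fibers (matching_block i)) = 0.
Proof.
apply: max_red_degree_fibers_eq0 => u w /match_index_adj muw.
by left; rewrite /matching_block muw.
Qed.

Lemma kneser4_contractible : contractible (kneser_rel 4) 0 (singleton_partition V).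
Proof.
rewrite -matching_label_discrete.
apply: contractible_merge (merge_step_matching_label (isT : 0 < 3))
                          (eq_leq (matching_label_red_free 1)) _.
apply: contractible_merge (merge_step_matching_label (isT : 1 < 3))
                          (eq_leq (matching_label_red_free 2)) _.
apply: contractible_merge (merge_step_matching_label (isT : 2 < 3))
                          (eq_leq (matching_label_red_free 3)) _.
rewrite matching_label_block.
apply: contractible_merge (merge_step_matching_block (isT : 0 < 1 < 3))
                          (eq_leq (matching_block_red_free 2)) _.
apply: contractible_merge (merge_step_matching_block (isT : 0 < 2 < 3))
                          (eq_leq (matching_block_red_free 3)) _.
exact: contractible1 card_fibers_block.
Qed.

End KneserFour.

Theorem mainTheorem7 (n : nat) (hn : 2 <= n) :
  tww_is (kneser_rel n) (lb1 (kneser_rel n)) /\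
  lb1 (kneser_rel n) = (if 5 <= n then 2 * (n - 3) else 0).
Proof.
apply: tww_is_lb1; case: ifP => n5; last by [].
- by apply: kneser_contractible => // t k; exact: max_red_degree_stage.
- have [n3|->] : n <= 3 \/ n = 4 by lia.
    by apply: kneser_contractible => // t k _ _; rewrite max_red_degree_stage_small.
  exact: kneser4_contractible.
- apply: leq_lb1 => [|u v]; first by apply: card_kneser_vertex_gt1; lia.
  exact: kneser_max_red_degree_pair_partition.
Qed.
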